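(* Let $K$ be a field of prime characteristic $p$, $C$ a cyclic $p$-group of order $q>1$, $\tilde C$ its subgroup of index $p$, and $A\in R_{KC}$ with $A\in\mathbb{Z}\{V_p,V_{2p},\dots,V_q\}$. (i) If $A\!\downarrow_{\tilde C}=0$ then $A=0$. (ii) If $A\!\downarrow_{\tilde C}\in\mathbb{Z}\tilde V_{q/p}$ then $A\in\mathbb{Z}V_q$.
   Context: The indecomposable $KC$-modules up to isomorphism are $V_1,\dots,V_q$ with $\dim V_r=r$, and those of $K\tilde C$ are $\tilde V_1,\dots,\tilde V_{q/p}$ with $\dim\tilde V_s=s$. $R_{KC}$ and $R_{K\tilde C}$ are the Green rings (bases these indecomposables, addition from direct sum, multiplication from tensor product). $A\mapsto A\!\downarrow_{\tilde C}$ is the ring homomorphism $R_{KC}\to R_{K\tilde C}$ induced by restriction of modules. *)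

From mathcomp Require Import all_boot all_order all_algebra.
Set Implicit Arguments. Unset Strict Implicit. Unset Printing Implicit Defensive.
Import GRing.Theory.
Local Open Scope ring_scope.

(* Model: C = <g> cyclic of order q, Ctilde = <g^p>.
   A KC-module of dimension n is given by the matrix of g.
   V_r = K[g]/(g-1)^r : g acts by the unipotent Jordan block of size r. *)

Definition shift_mx (K : fieldType) (n : nat) : 'M[K]_n :=
  \matrix_(i < n, j < n) (i.+1 == j :> nat)%:R.

Definition Vgen (K : fieldType) (r : nat) : 'M[K]_r := 1%:M + shift_mx K r.

Definition res_gen (K : fieldType) (p r : nat) : 'M[K]_r := Vgen K r ^+ p.

(* For a nilpotent N, number of Jordan blocks of size >= s (s >= 1) *)
Definition nblocks_ge (K : fieldType) (n : nat) (N : 'M[K]_n) (s : nat) : nat :=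
  (\rank (N ^+ s.-1) - \rank (N ^+ s))%N.

Definition jordan_mult (K : fieldType) (n : nat) (N : 'M[K]_n) (s : nat) : nat :=
  (nblocks_ge N s - nblocks_ge N s.+1)%N.

(* multiplicity of the indecomposable KCtilde-module Vtilde_s
   (g^p acting by a unipotent Jordan block of size s) in V_r restricted to Ctilde,
   i.e. number of Jordan blocks of size s of (g^p - 1) on V_r *)
Definition res_mult (K : fieldType) (p r s : nat) : nat :=
  jordan_mult (res_gen K p r - 1%:M) s.

(* An element A = \sum_{r=1}^q c r * V_r of the Green ring R_KC is encoded by
   its coefficient function c (only c 1, ..., c q are relevant).
   res_coef K p q c s = coefficient of Vtilde_s in A restricted to Ctilde. *)
Definition res_coef (K : fieldType) (p q : nat) (c : nat -> int) (s : nat) : int :=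
  \sum_(1 <= r < q.+1) c r * (res_mult K p r s)%:Z.

From mathcomp Require Import all_boot all_order all_fingroup all_algebra zify.
Set Implicit Arguments. Unset Strict Implicit.
Import GRing.Theory.
Local Open Scope ring_scope.

(* Since [(1 + N)^p = 1 + N^p] in characteristic [p], restricting [V_(m p)]
   to the subgroup of index [p] amounts to taking the [p]-th power of the
   nilpotent Jordan block [N] of size [m p], which splits into [p] Jordan
   blocks of size [m]. Hence the coefficient of [Vtilde_s] in the restriction
   of [A] is [p] times the coefficient of [V_(s p)] in [A], and both parts
   follow as [A] only involves the [V_(s p)]. *)

Lemma shift_mx_expE (K : fieldType) r k :
  shift_mx K r ^+ k = \matrix_(i < r, j < r) (i + k == j)%N%:R.
Proof.
elim: k => [|k IHk]; apply/matrixP=> i j; first by rewrite expr0 !mxE addn0.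
rewrite exprSr IHk !mxE.
have [ik_lt_r | r_le_ik] := ltnP (i + k) r.
  rewrite (bigD1 (Ordinal ik_lt_r)) //= !mxE eqxx mul1r addnS big1 ?addr0 //.
  move=> l /eqP l_neq; rewrite !mxE.
  have [ik_eq|] := eqVneq (i + k)%N l; last by rewrite mul0r.
  by case: l_neq; apply: val_inj; rewrite /= ik_eq.
rewrite big1 => [|l _]; last first.
  by rewrite !mxE; have [ik_eq|] := eqVneq (i + k)%N l; [have := ltn_ord l; lia|rewrite mul0r].
by have [ij_eq|//] := eqVneq (i + k.+1)%N j; have := ltn_ord j; lia.
Qed.

Section Rotation.

Variables (r k : nat).
Hypothesis k_le_r : (k <= r)%N.

Definition rot_ord (j : 'I_r) : 'I_r :=
  Ordinal (ltn_pmod (j + (r - k)) (leq_ltn_trans (leq0n j) (ltn_ord j))).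

Definition unrot_ord (j : 'I_r) : 'I_r :=
  Ordinal (ltn_pmod (j + k) (leq_ltn_trans (leq0n j) (ltn_ord j))).

Lemma rot_ordK : cancel rot_ord unrot_ord.
Proof.
move=> j; apply: val_inj => /=.
by rewrite modnDml -addnA subnK // -modnDmr modnn addn0 modn_small.
Qed.

Lemma rot_ord_inj : injective rot_ord.
Proof. exact: can_inj rot_ordK. Qed.

Lemma shift_mx_exp_col_perm (K : fieldType) :
  shift_mx K r ^+ k = col_perm (perm rot_ord_inj) (pid_mx (r - k)).
Proof.
rewrite shift_mx_expE; apply/matrixP => i j; rewrite !mxE permE /=.
congr (nat_of_bool _)%:R; have [ij_eq|ij_neq] := eqVneq (i + k)%N j.
  rewrite -ij_eq /= -addnA subnKC // -modnDmr modnn addn0 modn_small // eqxx.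
  by have := ltn_ord j; lia.
apply/esym/negbTE; apply: contra ij_neq => /andP[/eqP i_eq i_lt].
rewrite -(rot_ordK j) /= -i_eq modn_small //; lia.
Qed.

End Rotation.

Lemma rank_shift_mx_exp (K : fieldType) r k :
  \rank (shift_mx K r ^+ k) = (r - k)%N.
Proof.
have [k_le_r | r_lt_k] := leqP k r.
  rewrite (shift_mx_exp_col_perm k_le_r K) col_permE.
  by rewrite mxrankMfree ?row_free_unit ?unitmx_perm // rank_pid_mx // leq_subr.
suff -> : shift_mx K r ^+ k = 0 by rewrite mxrank0; lia.
apply/matrixP => i j; rewrite shift_mx_expE !mxE.
by have [ij_eq|//] := eqVneq (i + k)%N j; have := ltn_ord j; lia.
Qed.

Lemma nblocks_ge_shift_mx_exp (K : fieldType) m d s : (0 < s)%N ->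
  nblocks_ge (shift_mx K (m * d) ^+ d) s = ((s <= m) * d)%N.
Proof.
move=> s_gt0; rewrite /nblocks_ge -!exprM !rank_shift_mx_exp.
rewrite mulnC -!mulnBr mulnC; congr (_ * _)%N; lia.
Qed.

Lemma jordan_mult_shift_mx_exp (K : fieldType) m d s : (0 < s)%N ->
  jordan_mult (shift_mx K (m * d) ^+ d) s = ((s == m) * d)%N.
Proof.
move=> s_gt0; rewrite /jordan_mult !nblocks_ge_shift_mx_exp //.
rewrite -mulnBl; congr (_ * _)%N; lia.
Qed.

Lemma res_gen_subr1 (K : fieldType) p r : p \in [pchar K] ->
  res_gen K p r - 1%:M = shift_mx K r ^+ p.
Proof.
case: r => [|r] pK; first by apply/matrixP => -[].
have pM : p \in [pchar 'M[K]_r.+1] by rewrite pchar_lalg.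
rewrite /res_gen /Vgen -[1%:M]/(1 : 'M[K]_r.+1) -(pFrobenius_autE pM).
rewrite pFrobenius_autD_comm; last exact/commr_sym/commr1.
by rewrite !pFrobenius_autE expr1n addrC addKr.
Qed.

Lemma res_mult_mulp (K : fieldType) p m s : p \in [pchar K] -> (0 < s)%N ->
  res_mult K p (m * p) s = ((s == m) * p)%N.
Proof.
by move=> pK s_gt0; rewrite /res_mult res_gen_subr1 // jordan_mult_shift_mx_exp.
Qed.

Lemma res_coef_pchar (K : fieldType) p q (c : nat -> int) s :
  p \in [pchar K] ->
  (forall r : nat, (0 < r <= q)%N -> ~~ (p %| r)%N -> c r = 0) ->
  (0 < s)%N -> (s * p <= q)%N ->
  res_coef K p q c s = c (s * p)%N * p%:Z.
Proof.
move=> pK c_pdiv s_gt0 sp_le_q; have p_gt0 := prime_gt0 (pcharf_prime pK).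
rewrite /res_coef (bigD1_seq (s * p)%N) /=; last exact: iota_uniq; last first.
  by rewrite mem_index_iota muln_gt0 s_gt0 p_gt0 ltnS.
rewrite res_mult_mulp // eqxx mul1n big1_seq ?addr0 // => r /andP[r_neq].
rewrite mem_index_iota ltnS => r_range.
have [/dvdnP[m r_eq]|p_ndvd_r] := boolP (p %| r)%N; last by rewrite c_pdiv ?mul0r.
rewrite r_eq res_mult_mulp //; have [s_eq|] := eqVneq s m; last by rewrite mulr0.
by move: r_neq; rewrite r_eq s_eq eqxx.
Qed.

Theorem lemma4p1 (K : fieldType) (p n : nat) (c : nat -> int) :
  prime p -> p \in [pchar K] -> (0 < n)%N ->
  let q := (p ^ n)%N in
  (forall r : nat, (0 < r <= q)%N -> ~~ (p %| r)%N -> c r = 0) ->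
  ((forall s : nat, (0 < s <= q %/ p)%N -> res_coef K p q c s = 0) ->
     forall r : nat, (0 < r <= q)%N -> c r = 0) /\
  ((forall s : nat, (0 < s < q %/ p)%N -> res_coef K p q c s = 0) ->
     forall r : nat, (0 < r < q)%N -> c r = 0).
Proof.
move=> p_prime pK n_gt0 q c_pdiv.
have p_gt0 := prime_gt0 p_prime.
have p_dvd_q : (p %| q)%N by rewrite dvdn_exp.
have c_eq0 r : (0 < r <= q)%N ->
    ((p %| r)%N -> res_coef K p q c (r %/ p) = 0) -> c r = 0.
  move=> /andP[r_gt0 r_le_q] res0.
  have [p_dvd_r|] := boolP (p %| r)%N; last by apply: c_pdiv; rewrite r_gt0.
  have r_div_gt0 : (0 < r %/ p)%N by rewrite divn_gt0 // dvdn_leq.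
  have := res0 p_dvd_r; rewrite res_coef_pchar ?divnK //.
  by move/eqP; rewrite mulf_eq0 eqz_nat (negbTE (lt0n_neq0 p_gt0)) orbF => /eqP.
split=> res0 r /andP[r_gt0 r_le_q]; apply: c_eq0 => [|p_dvd_r].
- by rewrite r_gt0.
- by apply: res0; rewrite divn_gt0 // dvdn_leq // leq_div2r.
- by rewrite r_gt0 ltnW.
- by apply: res0; rewrite divn_gt0 // dvdn_leq // ltn_divRL // divnK.
Qed.
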